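(* Under condition $\mathcal D'_{q_n}$, for every $\tau>0$, $$\lim_{n\to\infty}k_n\mathbb P(\mathscr W^c_{r_n}(U_n(\tau)))=\theta\tau\qquad\text{and}\qquad\lim_{n\to\infty}\frac{\mathbb P(\mathscr W^c_{r_n}(U_n(\tau)))}{r_n\mathbb P(U_n(\tau))}=\theta.$$
   Context: $\mathbf X_0,\mathbf X_1,\dots$ stationary in $\mathbb R^d$, coordinate process with shift $\sigma$. Thresholds $u_n$ nonincreasing, left-continuous, $\lim_{\tau_1\to0,\tau_2\to\infty}\mathbb P(u_n(\tau_2)<\|\mathbf X_0\|<u_n(\tau_1))=1$, $n\mathbb P(\|\mathbf X_0\|>u_n(\tau))\to\tau$; $u_n^{-1}(z)=\sup\{\tau>0:z\le u_n(\tau)\}$. Sequences $k_n,t_n\to\infty$, $r_n=\lfloor n/k_n\rfloor\to\infty$, $k_nt_n=o(n)$, $q_n=o(r_n)$. $U_n(\tau)=\{\|\mathbf X_0\|>u_n(\tau)\}$, $U_n^{(q_n)}(\tau)=U_n(\tau)\cap\bigcap_{i=1}^{q_n}\{\|\mathbf X_i\|\le u_n(\tau)\}$; $\mathscr W^c_{r}(U_n(\tau))=\bigcup_{i=0}^{r-1}\sigma^{-i}(U_n(\tau))=\{\max_{0\le i<r}\|\mathbf X_i\|>u_n(\tau)\}$. Standing assumption (extremal index): $\theta=\lim_n\mathbb P(U_n^{(q_n)}(\tau))/\mathbb P(U_n(\tau))$ exists for all $\tau>0$. Condition $\mathcal D'_{q_n}$: for every set $A_1=\{(x_j):x_j\in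 H_j,\ j=0,\dots,m\}$ ($H_j$ Borel), with $A_{n,1}=\{(u_n^{-1}(\|\mathbf X_j\|)\mathbf X_j/\|\mathbf X_j\|)_{j\ge0}\in A_1\}$, $A^{(q)}=A\cap\bigcap_{i=1}^q\sigma^{-i}(A^c)$, $\mathscr W^c_{[a,b)}(A)=\bigcup_{a\le i<b}\sigma^{-i}(A)$: $\lim_nn\mathbb P(A^{(q_n)}_{n,1}\cap\mathscr W^c_{[q_n+1,r_n)}(A_{n,1}))=0$. *)

From HB Require Import structures.
From mathcomp Require Import all_boot all_order all_algebra.
From mathcomp Require Import all_classical all_reals all_analysis.
Set Implicit Arguments. Unset Strict Implicit. Unset Printing Implicit Defensive.
Import Order.TTheory GRing.Theory Num.Theory.
Import numFieldNormedType.Exports.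
Local Open Scope classical_set_scope.
Local Open Scope ring_scope.

Section Defs.
Variable R : realType.
Variable dim : nat.
Local Notation V := 'rV[R]_dim.
Local Notation Seq := (nat -> V).

Definition borelV : set (set V) := <<s [set A : set V | open A] >>.

Definition seq_sigma : set (set Seq) :=
  <<s [set C | exists (j : nat) (A : set V), borelV A /\ C = [set x : Seq | A (x j)]] >>.

Definition shiftinv (i : nat) (B : set Seq) : set Seq :=
  [set x | B (fun j => x (i + j)%N)].

Definition Wc (a b : nat) (B : set Seq) : set Seq :=
  [set x | exists i, (a <= i < b)%N /\ shiftinv i B x].

Definition qrun (q : nat) (B : set Seq) : set Seq :=
  B `&` [set x | forall i, (1 <= i <= q)%N -> ~ shiftinv i B x].

Definition Un (u : nat -> R -> R) (n : nat) (tau : R) : set Seq :=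
  [set x | u n tau < `|x 0%N|].

Definition uinv (u : nat -> R -> R) (n : nat) (z : R) : R :=
  sup [set tau | 0 < tau /\ z <= u n tau].

(* A_{n,1} for A_1 = {(x_j) : x_j \in H_j, j = 0..m} *)
Definition An1 (u : nat -> R -> R) (n m : nat) (H : nat -> set V) : set Seq :=
  [set x | forall j, (j <= m)%N ->
     H j (uinv u n `|x j| *: (`|x j|^-1 *: x j))].

Definition ev (T : Type) (X : nat -> T -> V) (B : set Seq) : set T :=
  [set w | B (fun j => X j w)].

End Defs.

Definition pr {d0 : measure_display} {T : measurableType d0} {R : realType}
  (P : probability T R) (A : set T) : R := fine (P A).

From HB Require Import structures.
From mathcomp Require Import all_boot all_order all_algebra.
From mathcomp Require Import all_classical all_reals all_analysis.
From mathcomp Require Import zify ring lra.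
Set Implicit Arguments.
Unset Strict Implicit.
Unset Printing Implicit Defensive.
Import Order.TTheory GRing.Theory Num.Theory.
Import numFieldNormedType.Exports.
Local Open Scope classical_set_scope.
Local Open Scope ring_scope.

(* Stationarity and a split of the block according to its last exceedance
   give P(W^c_r(A)) = \sum_{m < r} P(A^(m)).  For m >= q the summands differ
   from P(A^(q)) by at most P(A^(q) \cap W^c_[q+1,r)(A)), and the q first ones
   by at most P(A), so
     |P(W^c_r(A)) - r P(A^(q))| <= q P(A) + r P(A^(q) \cap W^c_[q+1,r)(A)).
   For A = U_n(tau) the last term is controlled by D'_{q_n} applied to
   H_j = {0 < |y| < tau}: the corresponding A_{n,1} is U_n(tau) minus a null
   set, namely the exceedances of size beyond every u_n(tau'), which have
   probability zero because u_n spans the whole range of |X_0|.  Multiplying by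
   k_n and using k_n r_n / n -> 1, n P(U_n) -> tau, P(U_n^(q_n)) / P(U_n) ->
   theta and q_n / r_n -> 0 yields both limits. *)

Section generated_sigma_algebra_closure.
Context {T : Type} {G : set (set T)}.

Lemma g_sigmaC A : <<s G >> A -> <<s G >> (~` A).
Proof. by move=> GA; rewrite -setTD; exact: sigma_algebraCD. Qed.

Lemma g_sigmaT : <<s G >> setT.
Proof. by have := g_sigmaC (@sigma_algebra0 _ setT G); rewrite setC0. Qed.

Lemma g_sigma_bigcup (D : set nat) (F : (set T)^nat) :
  (forall i, D i -> <<s G >> (F i)) -> <<s G >> (\bigcup_(i in D) F i).
Proof.
move=> GF; rewrite bigcup_mkcond; apply: sigma_algebra_bigcup => i.
by case: ifPn => [/set_mem|_]; [exact: GF | exact: sigma_algebra0].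
Qed.

Lemma g_sigma_bigcap (D : set nat) (F : (set T)^nat) :
  (forall i, D i -> <<s G >> (F i)) -> <<s G >> (\bigcap_(i in D) F i).
Proof.
move=> GF; rewrite -[X in <<s G >> X]setCK setC_bigcap.
apply: g_sigmaC; apply: g_sigma_bigcup => i Di.
by apply: g_sigmaC; exact: GF.
Qed.

Lemma g_sigmaI A B : <<s G >> A -> <<s G >> B -> <<s G >> (A `&` B).
Proof.
move=> GA GB; rewrite -bigcap2E.
by apply: g_sigma_bigcap => -[|[|i]] _ //=; exact: g_sigmaT.
Qed.

End generated_sigma_algebra_closure.

Lemma g_sigma_preimage {aT rT : Type} (G : set (set rT)) (M : set (set aT))
    (f : aT -> rT) :
  sigma_algebra setT M -> (forall B, G B -> M (f @^-1` B)) ->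
  forall B, <<s G >> B -> M (f @^-1` B).
Proof.
move=> sM GM B GB; suff : image_set_system setT f M B.
  by rewrite /image_set_system /= setTI.
apply: (smallest_sub (sigma_algebra_image f sM)) GB => C /GM.
by rewrite /image_set_system /= setTI.
Qed.

Section sequence_space.
Variables (R : realType) (dim : nat).
Local Notation V := 'rV[R]_dim.
Implicit Types (A : set (nat -> V)) (M : set V).

Lemma seq_sigma_coord j M : borelV M -> seq_sigma [set x : nat -> V | M (x j)].
Proof. by move=> bM; apply: (@sub_sigma_algebra _ setT); exists j, M. Qed.

Lemma seq_sigma_shift i A : seq_sigma A -> seq_sigma (shiftinv i A).
Proof.
move=> sA; apply: (g_sigma_preimage (f := fun x j => x (i + j)%N) _ _ sA).
  exact: smallest_sigma_algebra.
by move=> _ [j [M [bM ->]]]; exact: (seq_sigma_coord (i + j)).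
Qed.

Lemma seq_sigma_qrun q A : seq_sigma A -> seq_sigma (qrun q A).
Proof.
move=> sA; have -> : qrun q A =
    A `&` \bigcap_(i in [set i | (1 <= i <= q)%N]) ~` shiftinv i A by [].
apply: g_sigmaI => //; apply: g_sigma_bigcap => i _.
by apply: g_sigmaC; exact: seq_sigma_shift.
Qed.

Lemma seq_sigma_Wc a b A : seq_sigma A -> seq_sigma (Wc a b A).
Proof.
move=> sA; have -> : Wc a b A =
    \bigcup_(i in [set i | (a <= i < b)%N]) shiftinv i A.
  by apply/seteqP; split=> x [i]; [case|]; exists i.
by apply: g_sigma_bigcup => i _; exact: seq_sigma_shift.
Qed.

Lemma Wc0_0 A : Wc 0 0 A = set0.
Proof. by apply/seteqP; split=> x // [i []]. Qed.

(* [shiftinv 1 (shiftinv i A)] and [shiftinv i.+1 A] are convertible; the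
   proofs below rely on it silently. *)
Lemma Wc0S m A : Wc 0 m.+1 A = shiftinv 1 (Wc 0 m A) `|` qrun m A.
Proof.
apply/seteqP; split=> x.
- case=> -[|i] [im Aix]; last by left; exists i.
  have [[[|j] [/andP[//= _ jm] Ajx]]|none] :=
    pselect (exists j, (1 <= j <= m)%N /\ shiftinv j A x).
    by left; exists j.
  by right; split=> // j jm Ajx; apply: none; exists j.
- by case=> [[i [im Aix]]|[Ax _]]; [exists i.+1 | exists 0%N].
Qed.

Lemma shift_Wc0I_qrun m A : shiftinv 1 (Wc 0 m A) `&` qrun m A = set0.
Proof.
by apply/seteqP; split=> x // [[i [im Aix]] [_ none]]; exact: (none i.+1).
Qed.

Lemma qrunS m m' A : (m <= m')%N -> qrun m' A `<=` qrun m A.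
Proof.
move=> mm' x [Ax none]; split=> // i /andP[i1 im]; apply: none.
by rewrite i1 (leq_trans im mm').
Qed.

Lemma qrun_sub_qrunU_Wc q m r A : (q <= m < r)%N ->
  qrun q A `<=` qrun m A `|` (qrun q A `&` Wc q.+1 r A).
Proof.
move=> /andP[qm mr] x [Ax none].
have [[i [/andP[i1 im] Aix]]|none'] :=
  pselect (exists i, (1 <= i <= m)%N /\ shiftinv i A x).
- right; split=> //; exists i; split=> //.
  rewrite (leq_ltn_trans im mr) andbT ltnNge; apply/negP => iq.
  by apply: (none i) => //; rewrite i1.
- by left; split=> // i im Aix; apply: none'; exists i.
Qed.

Lemma qrunI_Wc_sub A0 A1 q r : A1 `<=` A0 ->
  qrun q A0 `&` Wc q.+1 r A0 `<=`
  (qrun q A1 `&` Wc q.+1 r A1) `|` Wc 0 r (A0 `\` A1).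
Proof.
move=> A10 x [[A0x none] [i [/andP[qi ir] Aix]]].
have [[j [jr Ajx]]|good] :=
  pselect (exists j, (j < r)%N /\ shiftinv j (A0 `\` A1) x).
  by right; exists j.
have A1_of j : (j < r)%N -> shiftinv j A0 x -> shiftinv j A1 x.
  by move=> jr Ajx; apply: contrapT => nA1; apply: good; exists j.
left; split; [split|exists i; split; first by rewrite qi].
- by apply: (A1_of 0%N) => //; lia.
- by move=> j jq /A10; exact: none.
- exact: A1_of.
Qed.

End sequence_space.

Section probability_pr.
Variables (d : measure_display) (T : measurableType d) (R : realType).
Variable P : probability T R.
Implicit Types A B : set T.

Lemma prE A : measurable A -> P A = (pr P A)%:E.
Proof. by move=> mA; rewrite /pr fineK // fin_num_measure. Qed.

Lemma pr_ge0 A : 0 <= pr P A.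
Proof. exact/fine_ge0/measure_ge0. Qed.

Lemma pr0 : pr P set0 = 0.
Proof. by rewrite /pr measure0. Qed.

Lemma le_pr A B : measurable A -> measurable B -> A `<=` B -> pr P A <= pr P B.
Proof.
move=> mA mB AB; rewrite -lee_fin -!prE //.
exact: le_measure (mem_set mA) (mem_set mB) AB.
Qed.

Lemma prU A B : measurable A -> measurable B -> A `&` B = set0 ->
  pr P (A `|` B) = pr P A + pr P B.
Proof.
move=> mA mB AB; apply: EFin_inj; rewrite EFinD -!prE //; last exact: measurableU.
exact: measureU.
Qed.

Lemma prU2 A B : measurable A -> measurable B ->
  pr P (A `|` B) <= pr P A + pr P B.
Proof.
move=> mA mB; rewrite -lee_fin EFinD -!prE //; last exact: measurableU.
exact: measureU2.
Qed.

End probability_pr.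

Section stationary_sequence.
Variables (R : realType) (dim : nat) (d : measure_display) (T : measurableType d).
Variables (P : probability T R) (X : nat -> T -> 'rV[R]_dim).
Hypothesis X_meas :
  forall j (M : set 'rV[R]_dim), borelV M -> measurable (X j @^-1` M).
Hypothesis X_stationary :
  forall B, seq_sigma B -> P (ev X B) = P (ev X (shiftinv 1 B)).
Local Notation PX A := (pr P (ev X A)).
Implicit Types A : set (nat -> 'rV[R]_dim).

Lemma measurable_ev A : seq_sigma A -> measurable (ev X A).
Proof.
move=> sA; apply: (g_sigma_preimage (f := fun w j => X j w) _ _ sA).
  exact: sigma_algebra_measurable.
by move=> _ [j [M [bM ->]]]; exact: X_meas.
Qed.

Lemma pr_Wc0 r A : seq_sigma A ->
  PX (Wc 0 r A) = \sum_(0 <= m < r) PX (qrun m A).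
Proof.
move=> sA; elim: r => [|r IH]; first by rewrite big_geq // Wc0_0 pr0.
have sW := seq_sigma_Wc 0 r sA.
rewrite big_nat_recr //= -IH Wc0S prU.
- by rewrite /pr -X_stationary.
- by apply: measurable_ev; exact: seq_sigma_shift.
- by apply: measurable_ev; exact: seq_sigma_qrun.
- exact: (congr1 (ev X) (shift_Wc0I_qrun r A)).
Qed.

Lemma pr_qrun_le q A : seq_sigma A -> PX (qrun q A) <= PX A.
Proof.
move=> sA; apply: le_pr => [||w []] //; last exact: measurable_ev.
by apply: measurable_ev; exact: seq_sigma_qrun.
Qed.

Lemma pr_Wc0_le r A : seq_sigma A -> PX (Wc 0 r A) <= r%:R * PX A.
Proof.
move=> sA; have -> : r%:R * PX A = \sum_(0 <= m < r) PX A.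
  by rewrite sumr_const_nat subn0 mulr_natl.
by rewrite pr_Wc0 //; apply: ler_sum => m _; exact: pr_qrun_le.
Qed.

Lemma measurable_ev_qrunI_Wc q a b A :
  seq_sigma A -> measurable (ev X (qrun q A `&` Wc a b A)).
Proof.
move=> sA; apply: measurable_ev; apply: g_sigmaI.
  exact: seq_sigma_qrun.
exact: seq_sigma_Wc.
Qed.

Lemma pr_Wc_qrun_approx q r A : seq_sigma A ->
  `|PX (Wc 0 r A) - r%:R * PX (qrun q A)| <=
    q%:R * PX A + r%:R * PX (qrun q A `&` Wc q.+1 r A).
Proof.
move=> sA; set g := fun m => PX (qrun m A); set D := PX (_ `&` _).
have mQ m : measurable (ev X (qrun m A)).
  by apply: measurable_ev; exact: seq_sigma_qrun.
have g_near m : `|g m - g q| <= PX A.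
  have := pr_qrun_le m sA; have := pr_qrun_le q sA.
  have := pr_ge0 P (ev X (qrun m A)); have := pr_ge0 P (ev X (qrun q A)).
  rewrite /g ler_norml; lra.
have g_far m : (q <= m < r)%N -> `|g m - g q| <= D.
  move=> /andP[qm mr].
  have g_anti : g m <= g q by apply: le_pr => // w; exact: qrunS.
  have g_drop : g q <= g m + D.
    apply: le_trans (prU2 P (mQ m) (measurable_ev_qrunI_Wc _ _ _ sA)).
    apply: le_pr => //; first exact: measurableU (measurable_ev_qrunI_Wc _ _ _ sA).
    by move=> w; apply: qrun_sub_qrunU_Wc; rewrite qm.
  rewrite ler_norml; apply/andP; split; lra.
set s := minn q r.
have -> : PX (Wc 0 r A) - r%:R * g q =
    \sum_(0 <= m < s) (g m - g q) + \sum_(s <= m < r) (g m - g q).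
  rewrite -big_cat_nat ?geq_minr // sumrB pr_Wc0 //.
  by rewrite sumr_const_nat subn0 mulr_natl.
apply: le_trans (ler_normD _ _) _; apply: lerD.
  apply: le_trans (ler_norm_sum _ _ _) _.
  apply: le_trans (ler_sum_nat (fun m _ => g_near m)) _.
  rewrite sumr_const_nat subn0 -[_ *+ _]mulr_natl.
  by apply: ler_wpM2r; [exact: pr_ge0 | rewrite ler_nat geq_minl].
apply: le_trans (ler_norm_sum _ _ _) _.
apply: le_trans (ler_sum_nat (G := fun=> D) _) _.
  move=> m /andP[sm mr]; apply: g_far.
  by rewrite mr andbT; move: sm; rewrite /s; lia.
rewrite sumr_const_nat -[_ *+ _]mulr_natl.
by apply: ler_wpM2r; [exact: pr_ge0 | rewrite ler_nat leq_subr].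
Qed.

Lemma pr_qrunI_Wc_null A0 A1 q r :
  seq_sigma A0 -> seq_sigma A1 -> A1 `<=` A0 -> PX (A0 `\` A1) = 0 ->
  PX (qrun q A0 `&` Wc q.+1 r A0) <= PX (qrun q A1 `&` Wc q.+1 r A1).
Proof.
move=> s0 s1 A10 null.
have sD : seq_sigma (A0 `\` A1) by apply: g_sigmaI => //; exact: g_sigmaC.
have mW := measurable_ev (seq_sigma_Wc 0 r sD).
have mD1 := measurable_ev_qrunI_Wc q q.+1 r s1.
apply: (@le_trans _ _ (PX ((qrun q A1 `&` Wc q.+1 r A1) `|` Wc 0 r (A0 `\` A1)))).
  apply: le_pr => [||w]; last exact: qrunI_Wc_sub.
  - exact: measurable_ev_qrunI_Wc.
  - exact: measurableU.
apply: le_trans (prU2 _ mD1 mW) _.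
by rewrite -[leRHS]addr0 lerD2l -(mulr0 r%:R) -null; exact: pr_Wc0_le.
Qed.

End stationary_sequence.

Section threshold_inverse.
Variables (R : realType) (u : nat -> R -> R) (n : nat).
Hypothesis u_noninc : forall s t, 0 < s -> s <= t -> u n t <= u n s.
Hypothesis u_leftc : forall tau, 0 < tau -> u n x @[x --> tau^'-] --> u n tau.

Lemma uinv_ge0 z : 0 <= uinv u n z.
Proof.
rewrite /uinv; set S := [set _ | _].
have [supS|/sup_out-> //] := pselect (has_sup S).
have [[s Ss] _] := supS.
exact: le_trans (ltW Ss.1) (sup_upper_bound supS Ss).
Qed.

Lemma uinv_gt0_lt tau z : 0 < tau ->
  0 < uinv u n z < tau <-> u n tau < z /\ exists k : nat, z <= u n k.+1%:R^-1.
Proof.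
move=> tau0; rewrite /uinv; set S := [set _ | _]; split.
- move=> /andP[supS0 supS_lt].
  have supS : has_sup S.
    by apply: contrapT => /sup_out supSE; rewrite supSE ltxx in supS0.
  have [[s [s0 zs]] _] := supS; split.
    rewrite ltNge; apply/negP => ztau.
    by have := sup_upper_bound supS (conj tau0 ztau); rewrite leNgt supS_lt.
  have [k] := ltr_add_invr s0; rewrite add0r => ks.
  by exists k; apply: le_trans zs (u_noninc _ (ltW ks)); rewrite invr_gt0.
- case=> ztau [k zk].
  have Sk : S k.+1%:R^-1 by split; rewrite ?invr_gt0.
  have S_ub : ubound S tau.
    move=> s [s0 zs]; rewrite leNgt; apply/negP => taus.
    by have := u_noninc tau0 (ltW taus); lra.
  have supS : has_sup S by split; [exists k.+1%:R^-1 | exists tau].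
  have supS_le : sup S <= tau by apply: ge_sup => //; exists k.+1%:R^-1.
  apply/andP; split.
    by apply: lt_le_trans (sup_upper_bound supS Sk); rewrite invr_gt0.
  rewrite lt_neqAle supS_le andbT; apply/eqP => supSE.
  suff : z <= u n tau by lra.
  (* if sup S = tau, every x < tau is dominated by a point of S, so z <= u n x *)
  apply: (cvgr_to_ge (u_leftc tau0)); near=> x.
  have x0 : 0 < x by near: x; exact: nbhs_left_gt.
  have xtau : 0 < tau - x by rewrite subr_gt0; near: x; exact: nbhs_left_lt.
  have [e [_ ze] xe] := sup_adherent xtau supS.
  rewrite supSE in xe; apply: le_trans ze (u_noninc x0 _); lra.
Unshelve. all: by end_near.
Qed.

End threshold_inverse.

Lemma borelV_norm (R : realType) (dim : nat) (O : set R) :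
  open O -> borelV [set v : 'rV[R]_dim | O `|v|].
Proof.
move=> oO; apply: (@sub_sigma_algebra _ setT).
by apply: open_comp oO => v _; exact: norm_continuous.
Qed.

Lemma seq_sigma_Un (R : realType) (dim : nat) (u : nat -> R -> R) n tau :
  @seq_sigma R dim (Un u n tau).
Proof. exact: (seq_sigma_coord 0 (borelV_norm (@open_gt R (u n tau)))). Qed.

Section threshold_window.
Variables (R : realType) (dim : nat) (u : nat -> R -> R) (n : nat).
Local Notation V := 'rV[R]_dim.

Definition uinv_window tau : set V :=
  [set v | 0 < `|v| /\ u n tau < `|v| /\ exists k : nat, `|v| <= u n k.+1%:R^-1].

Lemma borel_uinv_window tau : borelV (uinv_window tau).
Proof.
have -> : uinv_window tau = [set v | 0 < `|v|] `&` ([set v | u n tau < `|v|] `&`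
    \bigcup_k ~` [set v | u n k.+1%:R^-1 < `|v|]).
  apply/seteqP; split=> v.
    move=> [v0 [uv [k vk]]]; do 2 split=> //; exists k => //=.
    by apply/negP; rewrite -leNgt.
  move=> [v0 [uv [k _ vk]]]; do 2 split=> //; exists k.
  by rewrite leNgt; apply/negP.
apply: g_sigmaI; first exact: borelV_norm (@open_gt R 0).
apply: g_sigmaI; first exact: borelV_norm (@open_gt R (u n tau)).
apply: g_sigma_bigcup => k _; apply: g_sigmaC.
exact: borelV_norm (@open_gt R (u n k.+1%:R^-1)).
Qed.

Hypothesis u_noninc : forall s t, 0 < s -> s <= t -> u n t <= u n s.
Hypothesis u_leftc : forall tau, 0 < tau -> u n x @[x --> tau^'-] --> u n tau.

Lemma uinv_scale_window tau (v : V) : 0 < tau ->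
  0 < `|uinv u n `|v| *: (`|v|^-1 *: v)| < tau <-> uinv_window tau v.
Proof.
move=> tau0; have [->|v_neq0] := eqVneq v 0.
  by rewrite normr0 invr0 !scaler0 normr0 ltxx; split=> // -[]; rewrite normr0 ltxx.
have v0 : 0 < `|v| by rewrite normr_gt0.
rewrite !normrZ normfV normr_id mulVf ?gt_eqF // mulr1 ger0_norm ?uinv_ge0 //.
rewrite uinv_gt0_lt //; split=> [[]|[_ []]]; by [split|].
Qed.

Lemma An1_uinv_window tau : 0 < tau ->
  An1 u n 0 (fun=> [set y : V | 0 < `|y| < tau]) =
  [set x | uinv_window tau (x 0%N)].
Proof.
move=> tau0; apply/seteqP; split=> x /=.
  by move=> /(_ 0%N (leqnn 0)) /uinv_scale_window; apply.
by move=> wx [|j] // _; apply/uinv_scale_window.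
Qed.

End threshold_window.

Section threshold_null.
Variables (R : realType) (dim : nat) (d : measure_display) (T : measurableType d).
Variables (P : probability T R) (X : nat -> T -> 'rV[R]_dim) (u : nat -> R -> R).

Lemma Un_threshold_ge0 tau :
  (fun n => n%:R * pr P (ev X (Un u n tau))) @ \oo --> tau ->
  \forall n \near \oo, 0 <= u n tau.
Proof.
move=> np_cvg; near=> n; rewrite leNgt; apply/negP => un_lt0.
have UnT : ev X (Un u n tau) = setT.
  by apply/seteqP; split=> // w _; exact: lt_le_trans un_lt0 (normr_ge0 _).
have : n%:R * pr P (ev X (Un u n tau)) < tau + 1.
  by near: n; apply: cvgr_lt np_cvg _ _; rewrite ltrDl.
have : tau + 1 <= n%:R by near: n; exact: cvgry_ge cvgr_idn _.
rewrite UnT /pr probability_setT /= mulr1; lra.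
Unshelve. all: by end_near.
Qed.

Variable n : nat.
Hypothesis X0_meas : forall M, borelV M -> measurable (X 0%N @^-1` M).
Hypothesis u_noninc : forall s t, 0 < s -> s <= t -> u n t <= u n s.
Hypothesis u_range : forall eps, 0 < eps -> exists2 a, 0 < a & exists b,
  forall tau1 tau2, 0 < tau1 -> tau1 < a -> b < tau2 ->
    ((1 - eps)%:E < P [set w | (u n tau2 < `|X 0%N w| < u n tau1)%R])%E.

Lemma borel_norm_gt_thresholds :
  borelV (\bigcap_k [set v : 'rV[R]_dim | u n k.+1%:R^-1 < `|v|]).
Proof. by apply: g_sigma_bigcap => k _; exact: borelV_norm (@open_gt R _). Qed.

Lemma pr_norm_gt_thresholds_null :
  pr P (X 0%N @^-1` (\bigcap_k [set v | u n k.+1%:R^-1 < `|v|])) = 0.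
Proof.
have mZ := X0_meas borel_norm_gt_thresholds.
apply/le_anti; rewrite pr_ge0 andbT; apply/ler_addgt0Pr => eps eps0.
rewrite add0r; have [a a0 [b rg]] := u_range eps0.
have a20 : 0 < a / 2 by rewrite divr_gt0.
set Rg := [set w | (u n (`|b| + 1) < `|X 0%N w| < u n (a / 2))%R].
have {}rg : ((1 - eps)%:E < P Rg)%E.
  by apply: rg => //; [lra | have := ler_norm b; lra].
have mRg : measurable Rg.
  have -> : Rg = X 0%N @^-1` [set v | `|v| \in `]u n (`|b| + 1), u n (a / 2)[].
    by apply/seteqP; split=> w; rewrite /= in_itv.
  apply: X0_meas.
  exact: borelV_norm (interval_open (a := BRight _) (b := BLeft _) isT isT).
have ZRg : X 0%N @^-1` (\bigcap_k [set v | u n k.+1%:R^-1 < `|v|]) `<=` ~` Rg.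
  move=> w Zw /andP[_ lt_a2]; have [k] := ltr_add_invr a20; rewrite add0r => ka.
  have k0 : 0 < k.+1%:R^-1 :> R by rewrite invr_gt0.
  have /= := Zw k I; have := u_noninc k0 (ltW ka); lra.
move: rg (le_pr P mZ (measurableC mRg) ZRg).
by rewrite /pr probability_setC // (prE P mRg) -EFinB /= lte_fin; lra.
Qed.

Lemma pr_Un_diff_window_null tau : 0 <= u n tau ->
  pr P (ev X (Un u n tau `\` [set x | uinv_window u n tau (x 0%N)])) = 0.
Proof.
move=> un0; apply/le_anti; rewrite pr_ge0 andbT -pr_norm_gt_thresholds_null.
have -> : ev X (Un u n tau `\` [set x | uinv_window u n tau (x 0%N)]) =
    X 0%N @^-1` ([set v | u n tau < `|v|] `\` uinv_window u n tau) by [].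
apply: le_pr.
- apply: X0_meas; apply: g_sigmaI; first exact: borelV_norm (@open_gt R _).
  by apply: g_sigmaC; exact: borel_uinv_window.
- exact: X0_meas borel_norm_gt_thresholds.
move=> w [uX nW] k _ /=; rewrite ltNge; apply/negP => Xk; apply: nW.
by split; [exact: le_lt_trans un0 uX | split=> //; exists k].
Qed.

End threshold_null.

Section threshold_exceedances.
Variables (R : realType) (dim : nat) (d : measure_display) (T : measurableType d).
Variables (P : probability T R) (X : nat -> T -> 'rV[R]_dim) (u : nat -> R -> R).
Hypothesis X_meas :
  forall j (M : set 'rV[R]_dim), borelV M -> measurable (X j @^-1` M).
Hypothesis X_stationary :
  forall B, seq_sigma B -> P (ev X B) = P (ev X (shiftinv 1 B)).
Hypothesis u_noninc : forall n s t, 0 < s -> s <= t -> u n t <= u n s.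
Hypothesis u_leftc : forall n tau, 0 < tau -> u n x @[x --> tau^'-] --> u n tau.
Hypothesis u_range : forall n eps, 0 < eps -> exists2 a, 0 < a & exists b,
  forall tau1 tau2, 0 < tau1 -> tau1 < a -> b < tau2 ->
    ((1 - eps)%:E < P [set w | (u n tau2 < `|X 0%N w| < u n tau1)%R])%E.
Local Notation PX A := (pr P (ev X A)).

Lemma Dprime_Un_of_An1 (q r : nat -> nat) tau : 0 < tau ->
  (fun n => n%:R * PX (Un u n tau)) @ \oo --> tau ->
  (forall m (H : nat -> set 'rV[R]_dim), (forall j, borelV (H j)) ->
    (fun n => n%:R * PX (qrun (q n) (An1 u n m H)
                         `&` Wc (q n).+1 (r n) (An1 u n m H))) @ \oo --> (0 : R)) ->
  (fun n => n%:R * PX (qrun (q n) (Un u n tau)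
                       `&` Wc (q n).+1 (r n) (Un u n tau))) @ \oo --> (0 : R).
Proof.
move=> tau0 np_cvg D'.
have borel_H0 (j : nat) : borelV [set y : 'rV[R]_dim | 0 < `|y| < tau].
  exact: borelV_norm (interval_open (a := BRight 0) (b := BLeft tau) isT isT).
apply: (squeeze_cvgr _ (cvg_cst _) (D' 0%N _ borel_H0)).
have u_ge0 := Un_threshold_ge0 np_cvg.
near=> n; rewrite mulr_ge0 ?pr_ge0 //= ler_wpM2l //.
rewrite (An1_uinv_window dim (@u_noninc n) (@u_leftc n) tau0).
apply: pr_qrunI_Wc_null => //.
- exact: seq_sigma_Un.
- exact (seq_sigma_coord 0 (borel_uinv_window u n tau)).
- by move=> x [_ []].
- apply: (pr_Un_diff_window_null (X_meas 0%N) (@u_noninc n) (@u_range n)).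
  by near: n.
Unshelve. all: by end_near.
Qed.

End threshold_exceedances.

Section block_asymptotics.
Variables (R : realType) (k r q : nat -> nat) (W G p D : nat -> R) (tau theta : R).
Hypothesis tau_gt0 : 0 < tau.
Hypothesis W_approx : forall n,
  `|W n - (r n)%:R * G n| <= (q n)%:R * p n + (r n)%:R * D n.
Hypothesis G_ge0 : forall n, 0 <= G n.
Hypothesis G_le_p : forall n, G n <= p n.
Hypothesis np_cvg : (fun n => n%:R * p n) @ \oo --> tau.
Hypothesis Gp_cvg : (fun n => G n / p n) @ \oo --> theta.
Hypothesis nD_cvg : (fun n => n%:R * D n) @ \oo --> (0 : R).
Hypothesis qr_cvg : (fun n => (q n)%:R / (r n)%:R) @ \oo --> (0 : R).
Hypothesis krn_cvg : (fun n => (k n)%:R * (r n)%:R / n%:R) @ \oo --> (1 : R).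
Local Notation c n := ((k n)%:R * (r n)%:R / n%:R : R).

Lemma blocks_gt0 : \forall n \near \oo, [/\ (0 < n)%N, (0 < k n)%N & (0 < r n)%N].
Proof.
near=> n; have : 0 < c n :> R by near: n; exact: (cvgr_gt _ krn_cvg _ ltr01).
case: (posnP n) => [->|n0]; first by rewrite invr0 mulr0 ltxx.
case: (posnP (k n)) => [->|k0]; first by rewrite !mul0r ltxx.
by case: (posnP (r n)) => [->|r0]; first by rewrite mulr0 mul0r ltxx.
Unshelve. all: by end_near.
Qed.

Lemma blocks_kW_cvg : (fun n => (k n)%:R * W n) @ \oo --> theta * tau.
Proof.
set M := fun n => c n * (n%:R * p n) * (G n / p n).
set E := fun n => (q n)%:R / (r n)%:R * c n * (n%:R * p n) + c n * (n%:R * D n).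
have M_cvg : M @ \oo --> tau * theta.
  by have := cvgM (cvgM krn_cvg np_cvg) Gp_cvg; rewrite mul1r; apply.
have E_cvg : E @ \oo --> (0 : R).
  have := cvgD (cvgM (cvgM qr_cvg krn_cvg) np_cvg) (cvgM krn_cvg nD_cvg).
  by rewrite !mul0r mulr0 addr0; apply.
have kW_M : \forall n \near \oo, `|(k n)%:R * W n - M n| <= E n.
  near=> n; have [n0 k0 r0] : [/\ (0 < n)%N, (0 < k n)%N & (0 < r n)%N].
    by near: n; exact: blocks_gt0.
  have -> : (k n)%:R * W n - M n = (k n)%:R * (W n - (r n)%:R * G n).
    have [p0|p_neq0] := eqVneq (p n) 0.
      have G0 : G n = 0 by apply/eqP; rewrite eq_le G_ge0 andbT -p0 G_le_p.
      by rewrite /M p0 G0 !(mulr0, mul0r, subr0).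
    by rewrite /M; field; rewrite p_neq0 pnatr_eq0 -lt0n n0.
  have -> : E n = (k n)%:R * ((q n)%:R * p n + (r n)%:R * D n).
    by rewrite /E; field; rewrite !pnatr_eq0 -!lt0n n0 r0.
  by rewrite normrM ger0_norm ?ler0n // ler_wpM2l.
have kW_M_cvg : (fun n => (k n)%:R * W n - M n) @ \oo --> 0.
  apply: (squeeze_cvgr (f := - E) (h := E)); last exact: E_cvg.
    by near=> n; rewrite -ler_norml; near: n.
  by rewrite -oppr0; exact: cvgN.
have -> : (fun n => (k n)%:R * W n) = (fun n => ((k n)%:R * W n - M n) + M n).
  by apply/funext => n; rewrite subrK.
by rewrite mulrC -[tau * theta]add0r; exact: cvgD.
Unshelve. all: by end_near.
Qed.

Lemma blocks_W_ratio_cvg : (fun n => W n / ((r n)%:R * p n)) @ \oo --> theta.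
Proof.
have den_cvg : (fun n => c n * (n%:R * p n)) @ \oo --> tau.
  by rewrite -[tau]mul1r; exact: cvgM.
have kW_den : (fun n => (k n)%:R * W n / (c n * (n%:R * p n))) @ \oo -->
    theta * tau / tau.
  exact: cvgM blocks_kW_cvg (cvgV (lt0r_neq0 tau_gt0) den_cvg).
rewrite mulfK ?gt_eqF // in kW_den.
move: kW_den; apply: cvg_trans; apply: near_eq_cvg; near=> n.
have [n0 k0 r0] : [/\ (0 < n)%N, (0 < k n)%N & (0 < r n)%N].
  by near: n; exact: blocks_gt0.
have [p0|p_neq0] := eqVneq (p n) 0; first by rewrite p0 !(mulr0, invr0).
by field; rewrite p_neq0 !pnatr_eq0 -!lt0n n0 k0 r0.
Unshelve. all: by end_near.
Qed.

End block_asymptotics.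

Lemma floor_block_ratio_cvg (R : realType) (k : nat -> nat) (t : nat -> R) :
  (\forall n \near \oo, (0 < k n)%N) -> t @ \oo --> +oo ->
  (fun n => (k n)%:R * t n / n%:R) @ \oo --> (0 : R) ->
  (fun n => (k n)%:R * (n %/ k n)%:R / n%:R) @ \oo --> (1 : R).
Proof.
move=> k_gt0 t_cvg kt_cvg.
apply: (squeeze_cvgr (f := fun n => 1 - (k n)%:R * t n / n%:R) (h := fun=> 1)).
- near=> n; have k0 : (0 < k n)%N by near: n.
  have t1 : 1 <= t n by near: n; exact: cvgry_ge t_cvg 1.
  have n0 : (0 < n)%N by near: n; exists 1%N.
  have n0R : 0 < n%:R :> R by rewrite ltr0n.
  have lo : n%:R - (k n)%:R <= (k n)%:R * (n %/ k n)%:R :> R.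
    rewrite lerBlDr -natrM -natrD ler_nat.
    by rewrite mulnC addnC -mulSn ltnW // ltn_ceil.
  have hi : (k n)%:R * (n %/ k n)%:R <= n%:R :> R.
    by rewrite -natrM ler_nat mulnC leq_trunc_div.
  have kt : (k n)%:R <= (k n)%:R * t n by rewrite ler_peMr ?ler0n.
  apply/andP; split; last by rewrite ler_pdivrMr // mul1r.
  rewrite ler_pdivlMr // mulrBl mul1r divfK ?gt_eqF //; lra.
- by rewrite -[X in _ --> X]subr0; apply: cvgB => //; exact: cvg_cst.
- exact: cvg_cst.
Unshelve. all: by end_near.
Qed.

Theorem corollary3p5
  (R : realType) (dim : nat) (d0 : measure_display) (T : measurableType d0)
  (P : probability T R) (X : nat -> T -> 'rV[R]_dim)
  (u : nat -> R -> R) (k q : nat -> nat) (t : nat -> R) (theta : R)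
  (* each X_j is a random vector *)
  (hXmeas : forall j (A : set 'rV[R]_dim), borelV A -> measurable (X j @^-1` A))
  (* stationarity *)
  (hstat : forall B, seq_sigma B -> P (ev X B) = P (ev X (shiftinv 1 B)))
  (* thresholds: nonincreasing, left-continuous on (0, oo) *)
  (hu_noninc : forall (n : nat) (s t' : R), 0 < s -> s <= t' -> u n t' <= u n s)
  (hu_leftc : forall (n : nat) (tau : R), 0 < tau -> u n x @[x --> tau^'-] --> u n tau)
  (hu_range : forall (n : nat) (eps : R), 0 < eps -> exists2 a : R, 0 < a &
     exists b : R, forall tau1 tau2 : R, 0 < tau1 -> tau1 < a -> b < tau2 ->
       ((1 - eps)%:E < P [set w | (u n tau2 < `|X 0%N w| < u n tau1)%R])%E)
  (hu_tail : forall tau : R, 0 < tau ->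
     (fun n => n%:R * pr P (ev X (Un u n tau))) @ \oo --> tau)
  (* sequences k_n, t_n, r_n = floor(n / k_n), q_n *)
  (hk : (fun n => (k n)%:R : R) @ \oo --> +oo)
  (ht : t @ \oo --> +oo)
  (hr : (fun n => ((n %/ k n)%N)%:R : R) @ \oo --> +oo)
  (hkt : (fun n => (k n)%:R * t n / n%:R) @ \oo --> (0 : R))
  (hq : (fun n => (q n)%:R / ((n %/ k n)%N)%:R) @ \oo --> (0 : R))
  (* extremal index *)
  (htheta : forall tau : R, 0 < tau ->
     (fun n => pr P (ev X (qrun (q n) (Un u n tau))) / pr P (ev X (Un u n tau)))
       @ \oo --> theta)
  (* condition D'_{q_n} *)
  (hD : forall (m : nat) (H : nat -> set 'rV[R]_dim), (forall j, borelV (H j)) ->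
     (fun n => n%:R * pr P (ev X (qrun (q n) (An1 u n m H)
                                  `&` Wc (q n).+1 (n %/ k n) (An1 u n m H))))
       @ \oo --> (0 : R)) :
  forall tau : R, 0 < tau ->
    (fun n => (k n)%:R * pr P (ev X (Wc 0 (n %/ k n) (Un u n tau)))) @ \oo --> theta * tau
    /\
    (fun n => pr P (ev X (Wc 0 (n %/ k n) (Un u n tau)))
              / (((n %/ k n)%N)%:R * pr P (ev X (Un u n tau)))) @ \oo --> theta.
Proof.
move=> tau tau0.
have approx n :=
  pr_Wc_qrun_approx hXmeas hstat (q n) (n %/ k n) (seq_sigma_Un u n tau).
have Q_le_Un n := pr_qrun_le P hXmeas (q n) (seq_sigma_Un u n tau).
have D_cvg := Dprime_Un_of_An1 hXmeas hstat hu_noninc hu_leftc hu_range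
  tau0 (hu_tail _ tau0) hD.
have k_gt0 : \forall n \near \oo, (0 < k n)%N.
  by near=> n; rewrite -(ltr0n R); near: n; exact: cvgry_gt hk 0.
have kr_cvg := floor_block_ratio_cvg k_gt0 ht hkt.
split.
  exact: blocks_kW_cvg approx (fun n => pr_ge0 P _) Q_le_Un
    (hu_tail _ tau0) (htheta _ tau0) D_cvg hq kr_cvg.
exact: blocks_W_ratio_cvg tau0 approx (fun n => pr_ge0 P _) Q_le_Un
  (hu_tail _ tau0) (htheta _ tau0) D_cvg hq kr_cvg.
Unshelve. all: by end_near.
Qed.
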